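(* Let $\pi=\pi_{-n}\cdots\pi_{-1}\pi_1\cdots\pi_n$ be a signed permutation of $[n]$ in full notation. Let $i>0$ be the largest index such that $\pi_i<0$ if such an index exists, and $i=0$ otherwise. Let $\sigma_L=\pi_{-n}\cdots\pi_{-(i+1)}$, $\tau=\pi_{-i}\cdots\pi_{-1}\pi_1\cdots\pi_i$ (empty if $i=0$), and $\sigma_R=\pi_{i+1}\cdots\pi_n$, so that $\pi=\sigma_L\tau\sigma_R$. Then $\pi$ is $\underline{2}31$-avoiding if and only if all of the following hold: (1) the positive entries of $\tau$ appear in decreasing order; (2) $\sigma_R$ avoids the pattern $231$; (3) for every positive entry $x$ of $\tau$, all entries of $\sigma_R$ smaller than $x$ appear to the left of all entries of $\sigma_R$ larger than $x$.
   Context: A signed permutation of $[n]$ is a sequence $(\pi_1,\dots,\pi_n)$ of elements of $\{\pm1,\dots,\pm n\}$ with $\{|\pi_1|,\dots,|\pi_n|\}=[n]$; its full notation is the string $\pi_{-n}\pi_{-(n-1)}\cdots\pi_{-1}\pi_1\pi_2\cdots\pi_n$ with $\pi_{-j}:=-\pi_j$. A string $s$ of integers contains the pattern $231$ if there are positions $k<l<m$ with $s_m<s_k<s_l$, and avoids it otherwise. A signed permutation in full notation is $\underline{2}31$-avoiding if there are no positions $k<l<m$ (in the order of the full notation) with $\pi_m<\pi_k<\pi_l$ and $\pi_k>0$. *)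

From mathcomp Require Import all_boot all_order all_algebra.
Set Implicit Arguments. Unset Strict Implicit. Unset Printing Implicit Defensive.
Import Order.TTheory GRing.Theory Num.Theory.
Local Open Scope ring_scope.

(* A signed permutation of [n], given by the sequence (pi_1, ..., pi_n)
   of its entries (0-based list index j stores pi_(j+1)). *)
Definition signed_perm (n : nat) (s : seq int) : Prop :=
  size s = n /\ perm_eq (map (fun x : int => absz x) s) (iota 1 n).

Definition full_notation (s : seq int) : seq int :=
  rev (map (fun x => - x) s) ++ s.

Definition contains231 (s : seq int) : Prop :=
  exists k l m : nat, (k < l)%N /\ (l < m)%N /\ (m < size s)%N /\
    nth 0 s m < nth 0 s k /\ nth 0 s k < nth 0 s l.

Definition avoids231 (s : seq int) : Prop := ~ contains231 s.

(* s contains the pattern underline-2 31 (the "2" entry positive). *)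
Definition contains_u231 (s : seq int) : Prop :=
  exists k l m : nat, (k < l)%N /\ (l < m)%N /\ (m < size s)%N /\
    nth 0 s m < nth 0 s k /\ nth 0 s k < nth 0 s l /\ 0 < nth 0 s k.

Definition avoids_u231 (s : seq int) : Prop := ~ contains_u231 s.

(* i (1-based) is the largest index with pi_i < 0, or i = 0 if none exists. *)
Definition last_neg_index (s : seq int) (i : nat) : Prop :=
  (i <= size s)%N /\ ((0 < i)%N -> nth 0 s i.-1 < 0) /\
  (forall j : nat, (i <= j)%N -> (j < size s)%N -> 0 <= nth 0 s j).

Definition tau_part (s : seq int) (i : nat) : seq int :=
  rev (map (fun x => - x) (take i s)) ++ take i s.
Definition sigmaR_part (s : seq int) (i : nat) : seq int := drop i s.

Definition pos_decreasing (t : seq int) : Prop :=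
  sorted (fun a b : int => b < a) (filter (fun x : int => 0 < x) t).

Definition split_by (x : int) (r : seq int) : Prop :=
  forall a b : nat, (a < size r)%N -> (b < size r)%N ->
    nth 0 r a < x -> x < nth 0 r b -> (a < b)%N.

From mathcomp Require Import all_boot all_order all_algebra zify.
Import Order.TTheory GRing.Theory Num.Theory.
Set Implicit Arguments. Unset Strict Implicit.
Local Open Scope ring_scope.

(* Write the full notation as sigma_L tau sigma_R: sigma_L = -rev sigma_R has
   entries <= 0, sigma_R has entries >= 0, and tau ends with pi_i < 0.  View an
   occurrence of 2-31 as a subsequence x y z with z < x < y and x > 0.  Then x is
   not in sigma_L; if x, y lie in tau, (1) fails; if x lies in tau and y, z in
   sigma_R, (3) fails; if x, y, z lie in sigma_R, (2) fails.  Conversely, an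
   increasing positive pair of tau is completed by pi_i, and a 231 of sigma_R is
   already an occurrence.  (1) is strict because the positive entries of tau,
   being the absolute values of pi_1, ..., pi_i, are distinct. *)

Section SubseqNth.
Context {T : eqType} (x0 : T).
Implicit Types (x y z : T) (s t : seq T).

Lemma subseq_cons_nthP x t s :
  subseq (x :: t) s <->
  exists k, [/\ (k < size s)%N, nth x0 s k = x & subseq t (drop k.+1 s)].
Proof.
elim: s => [|a s IH] /=; first by split=> // -[k []].
case: eqP => [<-|neq_xa].
  split=> [sub_ts | [[|k] [_ _ sub_t]]]; first by exists 0%N; rewrite drop0.
    by rewrite drop0 in sub_t.
  exact: subseq_trans sub_t (drop_subseq _ _).
rewrite IH; split=> [[k [ks sk sub_t]] | [[|k] [ks sk sub_t]]]; first by exists k.+1.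
  by case: neq_xa.
by exists k.
Qed.

Lemma subseq2_nthP x y s :
  subseq [:: x; y] s <->
  exists k l, [/\ (k < l)%N, (l < size s)%N, nth x0 s k = x & nth x0 s l = y].
Proof.
rewrite subseq_cons_nthP; split.
  move=> [k [_ sk]]; rewrite sub1seq => /(nthP x0) [l'].
  rewrite size_drop nth_drop => ls sl.
  by exists k, (k.+1 + l')%N; split=> //; lia.
move=> [k [l [kl ls sk sl]]]; exists k; split=> //; first lia.
rewrite sub1seq; apply/(nthP x0); exists (l - k.+1)%N.
  by rewrite size_drop; lia.
by rewrite nth_drop subnKC.
Qed.

Lemma subseq3_nthP (P : T -> T -> T -> Prop) s :
  (exists k l m, (k < l)%N /\ (l < m)%N /\ (m < size s)%N /\
     P (nth x0 s k) (nth x0 s l) (nth x0 s m)) <->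
  (exists x y z, subseq [:: x; y; z] s /\ P x y z).
Proof.
split.
  move=> [k [l [m [kl [lm [ms Pklm]]]]]].
  exists (nth x0 s k), (nth x0 s l), (nth x0 s m); split=> //.
  apply/subseq_cons_nthP; exists k; split=> //; first lia.
  apply/subseq2_nthP; exists (l - k.+1)%N, (m - k.+1)%N.
  rewrite size_drop !nth_drop !subnKC ?(ltn_trans kl lm) //; split=> //; lia.
move=> [x [y [z [/subseq_cons_nthP [k [ks <- /subseq2_nthP sub_yz]] Pxyz]]]].
move: sub_yz => [l [m [lm]]]; rewrite size_drop !nth_drop => ms sl sm.
exists k, (k.+1 + l)%N, (k.+1 + m)%N; rewrite sl sm.
by do 3 (split; first lia).
Qed.

Lemma subseq_catP t s1 s2 :
  subseq t (s1 ++ s2) <->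
  exists t1 t2, [/\ t = t1 ++ t2, subseq t1 s1 & subseq t2 s2].
Proof.
split=> [|[t1 [t2 [-> ? ?]]]]; last exact: cat_subseq.
elim: s1 t => [|a s1 IH] t /=; first by move=> sub_t; exists [::], t.
case: t => [_|x t /=]; first by exists [::], [::]; rewrite !sub0seq.
case: eqP => [-> /IH [t1 [t2 [-> sub1 sub2]]] | _ /IH [t1 [t2 [-> sub1 sub2]]]].
  by exists (a :: t1), t2; rewrite /= eqxx.
by exists t1, t2; split=> //; apply: subseq_trans sub1 (subseq_cons _ _).
Qed.

Lemma subseq_rcons_last t s y :
  y != last x0 s -> subseq (rcons t y) s -> subseq (rcons (rcons t y) (last x0 s)) s.
Proof.
case/lastP: s => [|s z]; first by rewrite subseq0; case: t.
rewrite last_rcons => neq_yz sub_ty.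
rewrite -!cats1 subseq_cat2r cats1 -subseq_rev rev_rcons.
by move: sub_ty; rewrite -subseq_rev !rev_rcons /= (negPf neq_yz).
Qed.

Lemma pairwise_subseq2P (r : rel T) s :
  pairwise r s <-> forall x y, subseq [:: x; y] s -> r x y.
Proof.
split=> [pw_s x y sub_xy | ].
  by have := subseq_pairwise sub_xy pw_s; rewrite pairwise2.
elim: s => [|a s IH] r_sub //=; apply/andP; split.
  by apply/allP => y ys; apply: r_sub; rewrite /= eqxx sub1seq.
apply: IH => x y sub_xy; apply: r_sub.
exact: subseq_trans sub_xy (subseq_cons _ _).
Qed.

End SubseqNth.

Lemma contains231P s :
  contains231 s <-> exists x y z, subseq [:: x; y; z] s /\ z < x < y.
Proof.
rewrite /contains231 (subseq3_nthP 0 (fun x y z => z < x /\ x < y)).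
split=> -[x [y [z [sub_xyz zxy]]]]; exists x, y, z; split=> //; exact/andP.
Qed.

Lemma contains_u231P s :
  contains_u231 s <->
  exists x y z, [/\ subseq [:: x; y; z] s, z < x < y & 0 < x].
Proof.
rewrite /contains_u231 (subseq3_nthP 0 (fun x y z => z < x /\ x < y /\ 0 < x)).
split=> [[x [y [z [sub_xyz [zx [xy x0]]]]]] | [x [y [z [sub_xyz /andP[zx xy] x0]]]]];
  by exists x, y, z; rewrite ?zx ?xy.
Qed.

Lemma pos_decreasingP t :
  pos_decreasing t <->
  forall x y, subseq [:: x; y] t -> 0 < x -> 0 < y -> y < x.
Proof.
have gt_trans : transitive (fun a b : int => b < a).
  by move=> y x z yx zy; apply: lt_trans zy yx.
rewrite /pos_decreasing (sorted_pairwise gt_trans) pairwise_subseq2P.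
split=> [gt_sub x y sub_xy x0 y0 | gt_sub x y].
  by apply: gt_sub; rewrite subseq_filter /= x0 y0.
by rewrite subseq_filter /= andbT => /andP [/andP [x0 y0] sub_xy]; apply: gt_sub.
Qed.

Lemma split_byP x r :
  split_by x r <-> forall y z, subseq [:: y; z] r -> ~~ (z < x < y).
Proof.
split=> [split_r y z /(subseq2_nthP 0) [k [l [kl lr <- <-]]] |
         sep_r a b ar br ax xb].
  apply/negP => /andP [lx xk].
  by have := split_r l k lr (ltn_trans kl lr) lx xk; rewrite ltnNge (ltnW kl).
case: ltngtP => // [ba | eq_ab]; last by move: (lt_trans ax xb); rewrite eq_ab ltxx.
have sub_ba : subseq [:: nth 0 r b; nth 0 r a] r by apply/(subseq2_nthP 0); exists b, a.
by have := sep_r _ _ sub_ba; rewrite ax xb.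
Qed.

Section ThreeBlocks.
Variables L T R : seq int.
Hypothesis L_le0 : {in L, forall x, x <= 0}.
Hypothesis R_ge0 : {in R, forall x, 0 <= x}.
Hypothesis last_T_le0 : last 0 T <= 0.
Hypothesis uniq_pos_T : uniq (filter (fun x => 0 < x) T).

Let sub_T : subseq T (L ++ T ++ R).
Proof. exact: subseq_trans (prefix_subseq T R) (suffix_subseq L _). Qed.
Let sub_TR : subseq (T ++ R) (L ++ T ++ R).
Proof. exact: suffix_subseq. Qed.
Let sub_R : subseq R (L ++ T ++ R).
Proof. exact: subseq_trans (suffix_subseq T R) sub_TR. Qed.

Lemma avoids_u231_pos_decreasing :
  avoids_u231 (L ++ T ++ R) -> pos_decreasing T.
Proof.
move=> avoid; apply/pos_decreasingP => x y sub_xy x0 y0.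
have sub_pos_xy : subseq [:: x; y] (filter (fun x => 0 < x) T).
  by rewrite subseq_filter /= x0 y0.
have := subseq_uniq sub_pos_xy uniq_pos_T; rewrite /= inE andbT => neq_xy.
rewrite lt_neqAle eq_sym neq_xy leNgt; apply/negP => xy; apply: avoid.
have y_neq_last : y != last 0 T by rewrite gt_eqF // (le_lt_trans last_T_le0 y0).
have sub_xyz := subseq_rcons_last (t := [:: x]) y_neq_last sub_xy.
apply/contains_u231P; exists x, y, (last 0 T); split=> //.
- exact: subseq_trans sub_xyz sub_T.
- by rewrite xy (le_lt_trans last_T_le0 x0).
Qed.

Lemma avoids_u231_avoids231 : avoids_u231 (L ++ T ++ R) -> avoids231 R.
Proof.
move=> avoid /contains231P [x [y [z [sub_xyz /andP [zx xy]]]]]; apply: avoid.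
apply/contains_u231P; exists x, y, z; split; rewrite ?zx ?xy //.
- exact: subseq_trans sub_xyz sub_R.
- by apply: le_lt_trans zx; apply/R_ge0/(mem_subseq sub_xyz); rewrite !inE eqxx !orbT.
Qed.

Lemma avoids_u231_split_by x :
  avoids_u231 (L ++ T ++ R) -> x \in T -> 0 < x -> split_by x R.
Proof.
move=> avoid xT x0; apply/split_byP => y z sub_yz; apply/negP => zxy; apply: avoid.
apply/contains_u231P; exists x, y, z; split=> //.
by apply: subseq_trans sub_TR; apply: (cat_subseq (s1 := [:: x])); rewrite ?sub1seq.
Qed.

Lemma split_by_avoids_u231 :
  [/\ pos_decreasing T, avoids231 R & forall x, x \in T -> 0 < x -> split_by x R] ->
  avoids_u231 (L ++ T ++ R).
Proof.
move=> [decT avoidR splitR] /contains_u231P [x [y [z [sub_xyz zxy x0]]]].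
have {}sub_xyz : subseq [:: x; y; z] (T ++ R).
  move/subseq_catP: sub_xyz => [[|w t1] [t2 [/= e_xyz sub_L sub_t2]]].
    by rewrite e_xyz.
  case: e_xyz => e_xw _; have := L_le0 (mem_subseq sub_L (mem_head w t1)).
  by rewrite -e_xw leNgt x0.
move/subseq_catP: sub_xyz => [[|w [|w' t1]] [t2 [/= e_xyz sub_T1 sub_R2]]].
- by apply: avoidR; apply/contains231P; exists x, y, z; rewrite e_xyz.
- case: e_xyz => e_xw e_yz; subst w t2.
  have xT : x \in T by rewrite -sub1seq.
  by have := proj1 (split_byP x R) (splitR x xT x0) y z sub_R2; rewrite zxy.
- case: e_xyz => e_xw e_yw' _; subst w w'; move: zxy => /andP [_ xy].
  have sub_xy : subseq [:: x; y] T := subseq_trans (prefix_subseq [:: x; y] t1) sub_T1.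
  have := proj1 (pos_decreasingP T) decT x y sub_xy x0 (lt_trans x0 xy).
  by rewrite ltNge (ltW xy).
Qed.

Lemma avoids_u231_blocksP :
  avoids_u231 (L ++ T ++ R) <->
  [/\ pos_decreasing T, avoids231 R & forall x, x \in T -> 0 < x -> split_by x R].
Proof.
split=> [avoid | ]; last exact: split_by_avoids_u231.
split; [exact: avoids_u231_pos_decreasing | exact: avoids_u231_avoids231 |].
by move=> x; apply: avoids_u231_split_by.
Qed.

End ThreeBlocks.

Lemma full_notation_blocks s i :
  full_notation s =
  rev (map (fun x => - x) (sigmaR_part s i)) ++ tau_part s i ++ sigmaR_part s i.
Proof.
rewrite /full_notation /tau_part /sigmaR_part -{1 2}(cat_take_drop i s).
by rewrite map_cat rev_cat -!catA.
Qed.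

Lemma last_neg_index_sigmaR_ge0 s i :
  last_neg_index s i -> {in sigmaR_part s i, forall x, 0 <= x}.
Proof.
move=> [_ [_ ge0_s]] x /(nthP 0) [j]; rewrite size_drop nth_drop => js <-.
by apply: ge0_s; rewrite ?leq_addr // -ltn_subRL.
Qed.

Lemma last_neg_index_tau_le0 s i :
  last_neg_index s i -> last 0 (tau_part s i) <= 0.
Proof.
move=> [le_is [neg_i _]]; rewrite /tau_part last_cat.
case: i le_is neg_i => [|i] le_is neg_i; first by rewrite take0.
by rewrite -nth_last size_takel // nth_take // (set_nth_default 0) ?ltW ?neg_i.
Qed.

Lemma signed_perm_abs_uniq n s : signed_perm n s -> uniq (map absz s).
Proof. by move=> [_ perm_s]; rewrite (perm_uniq perm_s) iota_uniq. Qed.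

Lemma signed_perm_neq0 n s : signed_perm n s -> 0 \notin s.
Proof.
by move=> [_ perm_s]; apply/negP => /(map_f absz); rewrite (perm_mem perm_s) mem_iota.
Qed.

Lemma uniq_pos_tau s i :
  0 \notin s -> uniq (map absz s) -> uniq (filter (fun x => 0 < x) (tau_part s i)).
Proof.
move=> s_neq0 uniq_abs_s; set t := take i s.
have t_neq0 : 0 \notin t by apply: contra s_neq0; apply: mem_take.
have uniq_abs_t : uniq (map absz t) by rewrite map_take take_uniq.
apply: (map_uniq (f := absz)).
rewrite /tau_part -/t filter_cat filter_rev filter_map map_cat map_rev -map_comp.
under eq_map => x do rewrite /= abszN.
rewrite (perm_uniq (perm_cat (permEl (perm_rev _)) (perm_refl _))) -map_cat.
set neg := preim _ _.
have -> : filter (fun x => 0 < x) t = filter (predC neg) t.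
  apply: eq_in_filter => x xt; rewrite /= oppr_gt0 -leNgt lt_def.
  by have -> : x != 0 by apply: contraNneq t_neq0 => <-.
by rewrite (perm_uniq (perm_map _ (permEl (perm_filterC _ _)))).
Qed.

Theorem lemma4p1 (n : nat) (s : seq int) (i : nat) :
  signed_perm n s -> last_neg_index s i ->
  avoids_u231 (full_notation s) <->
  [/\ pos_decreasing (tau_part s i),
      avoids231 (sigmaR_part s i) &
      forall x : int, x \in tau_part s i -> 0 < x -> split_by x (sigmaR_part s i)].
Proof.
move=> perm_s neg_i; rewrite (full_notation_blocks s i).
have sigmaR_ge0 := last_neg_index_sigmaR_ge0 neg_i.
apply: avoids_u231_blocksP.
- by move=> x; rewrite mem_rev => /mapP [y /sigmaR_ge0 y_ge0 ->]; rewrite oppr_le0.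
- exact: sigmaR_ge0.
- exact: last_neg_index_tau_le0 neg_i.
- exact: uniq_pos_tau (signed_perm_neq0 perm_s) (signed_perm_abs_uniq perm_s).
Qed.
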